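(* Let $\gamma:[0,1]\to[0,1]^2$ be a continuous curve with $\gamma(0)=(0,0)$, $\gamma(1)=(1,1)$, and $\pi_2\circ\gamma\in\mathcal U$. Then for each $n\in\mathbb{N}$ there exist points $A_1,\ldots,A_{n+1}$ on $\gamma$ such that, setting $A_0=(0,0)$, $A_{n+2}=(1,1)$ and $A_{-1}=A_{n+1}-(1,1)$, $$\pi_2(\overrightarrow{A_iA_{i+1}})=\pi_1(\overrightarrow{A_{i-1}A_i}),\qquad i=0,\ldots,n+1.$$ Moreover, if $\gamma(t)\in\Delta$ for all $t\in(0,1)$, then the points $A_i$ can be chosen to be distinct.
   Context: $\pi_1(a,b)=a$ and $\pi_2(a,b)=b$ are the coordinate projections; $\overrightarrow{AB}=B-A$. $\Delta=\{(a,b)\in(0,1)^2: a>b\}$. A function $f:[0,1]\to\mathbb{R}$ is called piecewise monotone if there is a partition of $[0,1]$ into finitely many subintervals on each of which $f$ is strictly increasing or strictly decreasing. $\mathcal U$ denotes the set of piecewise monotone continuous functions $f:[0,1]\to[0,1]$ with the property that, for every $c\in[0,1]$, the set $f^{-1}(c)$ does not contain both a local maximum point and a local minimum point of $f$. *)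

From Stdlib Require Import Reals Lra Lia.
Open Scope R_scope.

Definition in01 (x : R) : Prop := 0 <= x <= 1.

Definition cont01 (f : R -> R) : Prop :=
  forall x, in01 x -> forall eps, 0 < eps ->
    exists delta, 0 < delta /\
      forall y, in01 y -> Rabs (y - x) < delta -> Rabs (f y - f x) < eps.

Definition strict_incr_on (f : R -> R) (a b : R) : Prop :=
  forall x y, a <= x -> x < y -> y <= b -> f x < f y.
Definition strict_decr_on (f : R -> R) (a b : R) : Prop :=
  forall x y, a <= x -> x < y -> y <= b -> f y < f x.

Definition piecewise_monotone (f : R -> R) : Prop :=
  exists (k : nat) (x : nat -> R),
    (0 < k)%nat /\ x 0%nat = 0 /\ x k = 1 /\
    (forall j, (j < k)%nat -> x j < x (S j)) /\
    (forall j, (j < k)%nat ->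
       strict_incr_on f (x j) (x (S j)) \/ strict_decr_on f (x j) (x (S j))).

Definition local_max_point (f : R -> R) (x : R) : Prop :=
  in01 x /\ exists eps, 0 < eps /\
    forall y, in01 y -> Rabs (y - x) < eps -> f y <= f x.
Definition local_min_point (f : R -> R) (x : R) : Prop :=
  in01 x /\ exists eps, 0 < eps /\
    forall y, in01 y -> Rabs (y - x) < eps -> f x <= f y.

Definition classU (f : R -> R) : Prop :=
  piecewise_monotone f /\ cont01 f /\ (forall x, in01 x -> in01 (f x)) /\
  forall c : R, ~ ((exists x, in01 x /\ f x = c /\ local_max_point f x) /\
                   (exists y, in01 y /\ f y = c /\ local_min_point f y)).

Definition pi1 (p : R * R) : R := fst p.
Definition pi2 (p : R * R) : R := snd p.

Definition DeltaSet (p : R * R) : Prop :=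
  0 < pi1 p < 1 /\ 0 < pi2 p < 1 /\ pi1 p > pi2 p.

Definition curve01 (g : R -> R * R) : Prop :=
  cont01 (fun t => pi1 (g t)) /\ cont01 (fun t => pi2 (g t)) /\
  forall t, in01 t -> in01 (pi1 (g t)) /\ in01 (pi2 (g t)).

Definition on_curve (g : R -> R * R) (p : R * R) : Prop :=
  exists t, in01 t /\ g t = p.

Definition prev_pt (A : nat -> R * R) (n i : nat) : R * R :=
  match i with
  | O => (pi1 (A (S n)) - 1, pi2 (A (S n)) - 1)
  | S j => A j
  end.

Definition good_points (g : R -> R * R) (n : nat) (A : nat -> R * R) : Prop :=
  A 0%nat = (0, 0) /\ A (S (S n)) = (1, 1) /\
  (forall i, (1 <= i <= S n)%nat -> on_curve g (A i)) /\
  (forall i, (i <= S n)%nat ->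
     pi2 (A (S i)) - pi2 (A i) = pi1 (A i) - pi1 (prev_pt A n i)).

From Stdlib Require Import Reals Lra Lia ClassicalEpsilon Classical Bool.
Open Scope R_scope.

(* Write X, Y for the coordinates of the curve. Points A_i = g(T_i) satisfy the
   relations exactly when Y(T_(i+1)) = X(T_i) + c for a fixed shift c, and A_(n+2) = (1,1)
   then amounts to X(T_(n+1)) + c = 1. Let K_m be the set of pairs (c, s) reached by such
   chains of length m ending at s. Every relatively clopen part of K_m containing (0,0)
   reaches the level X(s) + c = 1: for K_0 = [0,1] x {0} this is the connectedness of
   [0,1], and it passes from K_m to K_(m+1) because the alternating count, over the
   monotone laps of Y, of the laps on which a clopen part of K_(m+1) meets the height
   X(s) + c is locally constant on K_m, equal to 1 at (0,0) and to 0 at level 1.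
   A point of K_(n+1) at level 1 yields the chain. Inside Delta we have Y < X, which makes the second
   coordinates of the A_i strictly increasing, hence the points distinct. *)


Definition ind (P : Prop) : R := if excluded_middle_informative P then 1 else 0.

Lemma ind_true (P : Prop) : P -> ind P = 1.
Proof. intros H; unfold ind; destruct excluded_middle_informative; tauto. Qed.

Lemma ind_false (P : Prop) : ~ P -> ind P = 0.
Proof. intros H; unfold ind; destruct excluded_middle_informative; tauto. Qed.

Lemma ind_iff (P Q : Prop) : (P <-> Q) -> ind P = ind Q.
Proof. intros H; unfold ind; do 2 destruct excluded_middle_informative; tauto. Qed.

Definition clamp01 (t : R) : R := Rmax 0 (Rmin 1 t).

Lemma clamp01_in01 t : in01 (clamp01 t).
Proof. unfold in01, clamp01, Rmax, Rmin; repeat destruct Rle_dec; lra. Qed.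

Lemma clamp01_id t : in01 t -> clamp01 t = t.
Proof. unfold in01, clamp01, Rmax, Rmin; intros; repeat destruct Rle_dec; lra. Qed.

Lemma clamp01_lipschitz x y : Rabs (clamp01 y - clamp01 x) <= Rabs (y - x).
Proof.
  unfold clamp01, Rmax, Rmin; repeat destruct Rle_dec; unfold Rabs;
  repeat destruct Rcase_abs; lra.
Qed.

Lemma cont01_continuity_clamp f : cont01 f -> continuity (fun t => f (clamp01 t)).
Proof.
  intros Hf x eps Heps.
  destruct (Hf (clamp01 x) (clamp01_in01 x) eps Heps) as [d [Hd Hfd]].
  exists d; split; [exact Hd|]. intros y [_ Hy]. apply Hfd; [apply clamp01_in01|].
  eapply Rle_lt_trans; [apply clamp01_lipschitz | exact Hy].
Qed.

Lemma cont01_IVT f : cont01 f -> forall a b, 0 <= a -> a <= b -> b <= 1 ->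
  forall v, f a <= v <= f b -> exists t, a <= t <= b /\ f t = v.
Proof.
  intros Hf a b Ha Hab Hb v [H1 H2].
  destruct (Req_dec v (f a)) as [E|E]; [exists a; split; [lra|auto]|].
  destruct (Req_dec v (f b)) as [E'|E']; [exists b; split; [lra|auto]|].
  assert (Hlt : a < b) by (destruct (Req_dec a b); [subst; lra|lra]).
  assert (Hc : continuity (fun t => f (clamp01 t) - v)).
  { apply continuity_minus; [now apply cont01_continuity_clamp|].
    apply continuity_const; intros ? ?; reflexivity. }
  destruct (IVT _ a b Hc Hlt) as [z [Hz Ez]].
  - rewrite clamp01_id; [lra | unfold in01; lra].
  - rewrite clamp01_id; [lra | unfold in01; lra].
  - exists z; split; [exact Hz|]. rewrite clamp01_id in Ez; [lra | unfold in01; lra].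
Qed.

Lemma cont01_opp f : cont01 f -> cont01 (fun t => - f t).
Proof.
  intros H x Hx eps He. destruct (H x Hx eps He) as [d [Hd Hf]].
  exists d; split; [exact Hd|]. intros y Hy Hyx.
  replace (- f y - - f x) with (- (f y - f x)) by ring. rewrite Rabs_Ropp; auto.
Qed.

Lemma strict_incr_on_bounds f a b : strict_incr_on f a b ->
  forall t, a <= t <= b -> f a <= f t <= f b.
Proof.
  intros H t [H1 H2]. split.
  - destruct (Req_dec a t); [subst; lra|]. left; apply H; lra.
  - destruct (Req_dec t b); [subst; lra|]. left; apply H; lra.
Qed.

Lemma strict_incr_on_inj f a b : strict_incr_on f a b ->
  forall t1 t2, a <= t1 <= b -> a <= t2 <= b -> f t1 = f t2 -> t1 = t2.
Proof.
  intros H t1 t2 H1 H2 E. destruct (Rtotal_order t1 t2) as [L|[L|L]]; auto.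
  - pose proof (H t1 t2 ltac:(lra) L ltac:(lra)); lra.
  - pose proof (H t2 t1 ltac:(lra) L ltac:(lra)); lra.
Qed.

Lemma strict_incr_on_inv_cont f a b : strict_incr_on f a b ->
  forall t0, a <= t0 <= b -> forall e, 0 < e ->
  exists eta, 0 < eta /\
    forall t, a <= t <= b -> Rabs (f t - f t0) < eta -> Rabs (t - t0) < e.
Proof.
  intros Hinc t0 Ht0 e He.
  assert (Hup : exists h, 0 < h /\
    forall t, a <= t <= b -> t0 + e <= t -> h <= f t - f t0).
  { destruct (Rlt_or_le t0 b) as [Hb|Hb].
    - set (u := Rmin (t0 + e/2) b).
      assert (Hu : t0 < u /\ u <= b /\ u <= t0 + e/2) by (unfold u, Rmin; destruct Rle_dec; lra).
      exists (f u - f t0). split.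
      + pose proof (Hinc t0 u ltac:(lra) ltac:(lra) ltac:(lra)); lra.
      + intros t Ht Ht'. pose proof (Hinc u t ltac:(lra) ltac:(lra) ltac:(lra)); lra.
    - exists 1. split; [lra|]. intros t Ht Ht'. lra. }
  assert (Hdn : exists h, 0 < h /\
    forall t, a <= t <= b -> t <= t0 - e -> h <= f t0 - f t).
  { destruct (Rlt_or_le a t0) as [Ha|Ha].
    - set (u := Rmax (t0 - e/2) a).
      assert (Hu : u < t0 /\ a <= u /\ t0 - e/2 <= u) by (unfold u, Rmax; destruct Rle_dec; lra).
      exists (f t0 - f u). split.
      + pose proof (Hinc u t0 ltac:(lra) ltac:(lra) ltac:(lra)); lra.
      + intros t Ht Ht'. pose proof (Hinc t u ltac:(lra) ltac:(lra) ltac:(lra)); lra.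
    - exists 1. split; [lra|]. intros t Ht Ht'. lra. }
  destruct Hup as [h1 [Hh1 Hu]], Hdn as [h2 [Hh2 Hd]].
  exists (Rmin h1 h2). split; [now apply Rmin_glb_lt|].
  intros t Ht Hft. pose proof (Rmin_l h1 h2). pose proof (Rmin_r h1 h2).
  apply Rabs_def2 in Hft. apply Rabs_def1.
  - destruct (Rlt_or_le t (t0 + e)) as [|H1]; [lra|]. pose proof (Hu t Ht H1); lra.
  - destruct (Rlt_or_le (t0 - e) t) as [|H1]; [lra|]. pose proof (Hd t Ht H1); lra.
Qed.

Lemma near_level_in_range lo hi v : lo < hi -> lo <= v <= hi ->
  exists g, 0 < g /\ forall v', Rabs (v' - v) < g ->
    (v' < lo -> v = lo) /\ (hi < v' -> v = hi).
Proof.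
  intros Hlh Hv.
  destruct (Req_dec v lo) as [->|Nlo].
  { exists (hi - lo); split; [lra|]. intros v' H%Rabs_def2; split; lra. }
  destruct (Req_dec v hi) as [->|Nhi].
  { exists (hi - lo); split; [lra|]. intros v' H%Rabs_def2; split; lra. }
  exists (Rmin (v - lo) (hi - v)). split; [apply Rmin_glb_lt; lra|].
  intros v' H%Rabs_def2. pose proof (Rmin_l (v - lo) (hi - v)).
  pose proof (Rmin_r (v - lo) (hi - v)). split; lra.
Qed.

Lemma near_level_out_of_range lo hi v : v < lo \/ hi < v ->
  exists g, 0 < g /\ forall v', Rabs (v' - v) < g -> v' < lo \/ hi < v'.
Proof.
  intros [H|H]; [exists (lo - v) | exists (v - hi)];
    split; try lra; intros v' Hv%Rabs_def2; lra.
Qed.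

Definition lap_hit (f : R -> R) (a b : R) (P : R -> R -> Prop) (c v : R) : Prop :=
  exists t, a <= t <= b /\ f t = v /\ P c t.

(* The hit status can only change through an endpoint of the lap. *)
Lemma lap_hit_jump_incr (f : R -> R) a b (Hab : a < b) (Hinc : strict_incr_on f a b)
  (Hivt : forall w, f a <= w <= f b -> exists t, a <= t <= b /\ f t = w)
  (P Adm : R -> R -> Prop) (c v : R)
  (Hloc : forall t0, a <= t0 <= b -> f t0 = v -> exists e, 0 < e /\
    forall c' v' t', Adm c' v' -> Rabs (c' - c) < e -> Rabs (t' - t0) < e ->
      a <= t' <= b -> f t' = v' -> (P c' t' <-> P c t0)) :
  exists d, 0 < d /\ forall c' v', Adm c' v' -> Rabs (c' - c) < d -> Rabs (v' - v) < d ->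
    ind (lap_hit f a b P c v) - ind (lap_hit f a b P c' v')
    = ind (f a = v /\ P c a /\ v' < v) + ind (f b = v /\ P c b /\ v < v').
Proof.
  pose proof (strict_incr_on_bounds f a b Hinc) as Hle.
  pose proof (strict_incr_on_inj f a b Hinc) as Hinj.
  assert (Hfab : f a < f b) by (apply Hinc; lra).
  assert (hit_range : forall c0 w, lap_hit f a b P c0 w -> f a <= w <= f b).
  { intros c0 w [t [Ht [<- _]]]. auto. }
  assert (hit_at : forall c0 t0, a <= t0 <= b -> (lap_hit f a b P c0 (f t0) <-> P c0 t0)).
  { intros c0 t0 Ht0; split.
    - intros [t [Ht [Ft Pt]]]. now rewrite <- (Hinj t t0).
    - intros; exists t0; auto. }
  destruct (Rlt_or_le v (f a)) as [Hva|Hva];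
    [|destruct (Rlt_or_le (f b) v) as [Hvb|Hvb]].
  1,2: destruct (near_level_out_of_range (f a) (f b) v ltac:(lra)) as [g [Hg Hout]];
    exists g; split; [exact Hg|]; intros c' v' _ _ Hv';
    specialize (Hout v' Hv');
    rewrite (ind_false (lap_hit f a b P c v)) by (intros Hh%hit_range; lra);
    rewrite (ind_false (lap_hit f a b P c' v')) by (intros Hh%hit_range; lra);
    rewrite !ind_false by lra; ring.
  destruct (Hivt v (conj Hva Hvb)) as [t0 [Ht0 <-]].
  destruct (Hloc t0 Ht0 eq_refl) as [e [He Hloc0]].
  destruct (strict_incr_on_inv_cont f a b Hinc t0 Ht0 e He) as [eta [Heta Hinv]].
  destruct (near_level_in_range (f a) (f b) (f t0) Hfab (conj Hva Hvb)) as [g [Hg Hgap]].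
  assert (hit_near : forall c' v', Adm c' v' -> Rabs (c' - c) < e ->
      Rabs (v' - f t0) < eta -> f a <= v' <= f b -> (lap_hit f a b P c' v' <-> P c t0)).
  { intros c' v' Ha Hc Hv Hr. destruct (Hivt v' Hr) as [t' [Ht' <-]].
    rewrite (hit_at c' t' Ht'). apply (Hloc0 c' (f t') t'); auto. }
  exists (Rmin e (Rmin eta g)). split; [repeat apply Rmin_glb_lt; lra|].
  intros c' v' Ha Hc Hv.
  pose proof (Rmin_l e (Rmin eta g)). pose proof (Rmin_r e (Rmin eta g)).
  pose proof (Rmin_l eta g). pose proof (Rmin_r eta g).
  destruct (Hgap v' ltac:(lra)) as [Hlo Hhi].
  rewrite (ind_iff (lap_hit f a b P c (f t0)) (P c t0)) by (apply hit_at; exact Ht0).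
  destruct (Rlt_or_le v' (f a)) as [Hl|Hl];
    [|destruct (Rlt_or_le (f b) v') as [Hr|Hr]].
  - assert (t0 = a) as -> by (apply Hinj; lra).
    rewrite (ind_false (lap_hit f a b P c' v')) by (intros Hh%hit_range; lra).
    rewrite (ind_iff (f a = f a /\ _ /\ _) (P c a)) by (split; [tauto|repeat split; auto]).
    rewrite (ind_false (f b = f a /\ _)) by lra. ring.
  - assert (t0 = b) as -> by (apply Hinj; lra).
    rewrite (ind_false (lap_hit f a b P c' v')) by (intros Hh%hit_range; lra).
    rewrite (ind_iff (f b = f b /\ _ /\ _) (P c b)) by (split; [tauto|repeat split; auto]).
    rewrite (ind_false (f a = f b /\ _)) by lra. ring.
  - rewrite (ind_iff (lap_hit f a b P c' v') (P c t0)) by (apply hit_near; auto; lra).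
    rewrite (ind_false (f a = f t0 /\ _)), (ind_false (f b = f t0 /\ _)) by lra. ring.
Qed.

Lemma lap_hit_jump_decr (f : R -> R) a b (Hab : a < b) (Hdec : strict_decr_on f a b)
  (Hivt : forall w, f b <= w <= f a -> exists t, a <= t <= b /\ f t = w)
  (P Adm : R -> R -> Prop) (c v : R)
  (Hloc : forall t0, a <= t0 <= b -> f t0 = v -> exists e, 0 < e /\
    forall c' v' t', Adm c' v' -> Rabs (c' - c) < e -> Rabs (t' - t0) < e ->
      a <= t' <= b -> f t' = v' -> (P c' t' <-> P c t0)) :
  exists d, 0 < d /\ forall c' v', Adm c' v' -> Rabs (c' - c) < d -> Rabs (v' - v) < d ->
    ind (lap_hit f a b P c v) - ind (lap_hit f a b P c' v')
    = ind (f a = v /\ P c a /\ v < v') + ind (f b = v /\ P c b /\ v' < v).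
Proof.
  assert (hit_opp : forall c0 w,
      lap_hit (fun t => - f t) a b P c0 (- w) <-> lap_hit f a b P c0 w).
  { intros c0 w; split; intros [t [Ht [Ft Pt]]]; exists t; repeat split; auto; lra. }
  destruct (lap_hit_jump_incr (fun t => - f t) a b Hab) with
    (P := P) (Adm := fun c' w => Adm c' (- w)) (c := c) (v := - v) as [d [Hd Hjump]].
  - intros x y Hx Hxy Hy. pose proof (Hdec x y Hx Hxy Hy). lra.
  - intros w Hw. destruct (Hivt (- w)) as [t [Ht Ft]]; [lra|]. exists t; split; auto; lra.
  - intros t0 Ht0 Ft0. destruct (Hloc t0 Ht0 ltac:(lra)) as [e [He Hl]].
    exists e; split; [exact He|]. intros c' v' t' Ha Hc Ht Ht' Ft'.
    apply (Hl c' (- v')); auto; lra.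
  - exists d; split; [exact Hd|]. intros c' v' Ha Hc Hv.
    specialize (Hjump c' (- v')). rewrite Ropp_involutive in Hjump.
    replace (- v' - - v) with (- (v' - v)) in Hjump by ring. rewrite Rabs_Ropp in Hjump.
    rewrite <- (ind_iff _ _ (hit_opp c v)), <- (ind_iff _ _ (hit_opp c' v')).
    rewrite (Hjump Ha Hc Hv).
    f_equal; apply ind_iff; split; intros [A1 [A2 A3]]; repeat split; auto; lra.
Qed.

Fixpoint altsum (h : nat -> R) (k : nat) : R :=
  match k with O => 0 | S k' => altsum h k' + (-1) ^ k' * h k' end.

Lemma altsum_telescope h k : altsum (fun j => h j + h (S j)) k = h O - (-1) ^ k * h k.
Proof. induction k; simpl; [ring|]. rewrite IHk. ring. Qed.

Lemma altsum_ext h1 h2 k : (forall j, (j < k)%nat -> h1 j = h2 j) -> altsum h1 k = altsum h2 k.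
Proof.
  induction k; intros H; simpl; [reflexivity|].
  rewrite IHk, H; [reflexivity|lia|intros j Hj; apply H; lia].
Qed.

Lemma altsum_sub h1 h2 k : altsum h1 k - altsum h2 k = altsum (fun j => h1 j - h2 j) k.
Proof. induction k; simpl; [ring|]. rewrite <- IHk. ring. Qed.

Lemma even_succ_negb j : Nat.even (S j) = negb (Nat.even j).
Proof. now rewrite Nat.even_succ, <- Nat.negb_even. Qed.

Definition monotone_dir (f : R -> R) (a b : R) (up : bool) : Prop :=
  if up then strict_incr_on f a b else strict_decr_on f a b.

(* A partition of [[a, b]] into [k] laps of [f] with alternating direction,
   the first one increasing iff [up]. *)
Definition alt_laps (f : R -> R) (a b : R) (k : nat) (xs : nat -> R) (up : bool) : Prop :=
  (0 < k)%nat /\ xs O = a /\ xs k = b /\ (forall j, (j < k)%nat -> xs j < xs (S j)) /\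
  (forall j, (j < k)%nat -> monotone_dir f (xs j) (xs (S j)) (Bool.eqb up (Nat.even j))).

Lemma monotone_dir_concat f a b c up : a <= b -> b <= c ->
  monotone_dir f a b up -> monotone_dir f b c up -> monotone_dir f a c up.
Proof.
  destruct up; simpl; intros Hab Hbc H1 H2 x y Hx Hxy Hy;
  (destruct (Rle_or_lt y b); [apply H1; lra|]);
  (destruct (Rle_or_lt b x); [apply H2; lra|]);
  pose proof (H1 x b ltac:(lra) ltac:(lra) ltac:(lra));
  pose proof (H2 b y ltac:(lra) ltac:(lra) ltac:(lra)); lra.
Qed.

Lemma alt_laps_mono f a b k xs up : alt_laps f a b k xs up ->
  forall i j, (i <= j <= k)%nat -> xs i <= xs j.
Proof.
  intros [_ [_ [_ [Hinc _]]]] i j [Hij Hjk].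
  induction Hij as [|j Hij IH]; [lra|].
  pose proof (Hinc j ltac:(lia)). specialize (IH ltac:(lia)). lra.
Qed.

Lemma alt_laps_bounds f a b k xs up : alt_laps f a b k xs up ->
  forall j, (j <= k)%nat -> a <= xs j <= b.
Proof.
  intros Hp j Hj. pose proof Hp as [_ [H0 [Hk _]]].
  rewrite <- H0, <- Hk. split; apply (alt_laps_mono _ _ _ _ _ _ Hp); lia.
Qed.

(* A new monotone piece either prolongs the last lap or starts a new one. *)
Lemma alt_laps_snoc f a b c k xs up e : alt_laps f a b k xs up -> b < c ->
  monotone_dir f b c e -> exists k' xs', alt_laps f a c k' xs' up.
Proof.
  intros [Hk [H0 [Hkb [Hinc Hdir]]]] Hbc He.
  set (xs' := fun n i => if Nat.eqb i n then c else xs i).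
  assert (xs'_old : forall n i, i <> n -> xs' n i = xs i)
    by (intros n i Hi; unfold xs'; destruct (Nat.eqb_spec i n); [lia|reflexivity]).
  assert (xs'_new : forall n, xs' n n = c) by (intros n; unfold xs'; now rewrite Nat.eqb_refl).
  destruct (Bool.eqb e (Bool.eqb up (Nat.even (pred k)))) eqn:Ee.
  - apply eqb_prop in Ee. exists k, (xs' k).
    repeat split; [lia|rewrite xs'_old; [exact H0|lia]|apply xs'_new| |].
    + intros j Hj. rewrite xs'_old by lia.
      destruct (Nat.eq_dec (S j) k) as [Ej|Ej].
      * rewrite Ej, xs'_new. pose proof (Hinc j Hj). rewrite Ej, Hkb in *. lra.
      * rewrite xs'_old by lia. apply Hinc; lia.
    + intros j Hj. rewrite xs'_old by lia.
      destruct (Nat.eq_dec (S j) k) as [Ej|Ej].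
      * rewrite Ej, xs'_new. assert (j = pred k) as -> by lia.
        pose proof (Hinc (pred k) Hj). pose proof (Hdir (pred k) Hj). rewrite Ej, Hkb in *.
        apply monotone_dir_concat with (b := b); try lra; [assumption|now rewrite <- Ee].
      * rewrite xs'_old by lia. apply Hdir; lia.
  - exists (S k), (xs' (S k)).
    repeat split; [lia|rewrite xs'_old; [exact H0|lia]|apply xs'_new| |].
    + intros j Hj. rewrite xs'_old by lia.
      destruct (Nat.eq_dec j k) as [->|Ej].
      * rewrite xs'_new, Hkb. exact Hbc.
      * rewrite xs'_old by lia. apply Hinc; lia.
    + intros j Hj. rewrite xs'_old by lia.
      destruct (Nat.eq_dec j k) as [->|Ej].
      * rewrite xs'_new, Hkb.
        replace (Bool.eqb up (Nat.even k)) with e; [exact He|].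
        destruct k as [|k0]; [lia|]. simpl pred in Ee. rewrite even_succ_negb.
        destruct e, up, (Nat.even k0); simpl in *; auto; discriminate.
      * rewrite xs'_old by lia. apply Hdir; lia.
Qed.

Lemma piecewise_monotone_alt_laps f : piecewise_monotone f ->
  exists k xs up, alt_laps f 0 1 k xs up.
Proof.
  intros [k [x [Hk [Hx0 [Hxk [Hinc Hdir]]]]]]. rewrite <- Hx0, <- Hxk.
  assert (Hm : forall m, (1 <= m <= k)%nat -> exists k' xs up, alt_laps f (x O) (x m) k' xs up).
  { intros m [Hm1 Hmk]. induction Hm1 as [|m Hm1 IH].
    - destruct (Hdir O Hk) as [H|H]; [exists 1%nat, x, true|exists 1%nat, x, false];
        repeat split; auto; intros j Hj; replace j with O by lia; auto.
    - destruct (IH ltac:(lia)) as [k' [xs [up Hp]]].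
      destruct (Hdir m ltac:(lia)) as [H|H];
        [destruct (alt_laps_snoc f _ _ _ _ _ up true Hp (Hinc m ltac:(lia)) H) as [k'' [xs' Hp']]
        |destruct (alt_laps_snoc f _ _ _ _ _ up false Hp (Hinc m ltac:(lia)) H) as [k'' [xs' Hp']]];
        exists k'', xs', up; exact Hp'. }
  exact (Hm k ltac:(lia)).
Qed.

Lemma alt_laps_first_up f k xs up : alt_laps f 0 1 k xs up -> f 0 = 0 ->
  (forall t, in01 t -> 0 <= f t) -> up = true.
Proof.
  intros Hp Hf0 Hnn. destruct up; [reflexivity|exfalso].
  pose proof (alt_laps_bounds _ _ _ _ _ _ Hp 1%nat) as B1.
  destruct Hp as [Hk [H0 [_ [Hinc Hdir]]]].
  specialize (B1 ltac:(lia)). specialize (Hdir O Hk). specialize (Hinc O Hk). simpl in Hdir.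
  pose proof (Hdir (xs O) (xs 1%nat) ltac:(lra) ltac:(lra) ltac:(lra)). rewrite H0 in *.
  pose proof (Hnn (xs 1%nat) ltac:(unfold in01; lra)). lra.
Qed.

Section LevelChains.
Variables X Y : R -> R.
Hypothesis HXc : cont01 X.
Hypothesis HYc : cont01 Y.
Hypothesis HX01 : forall t, in01 t -> in01 (X t).
Hypothesis HY01 : forall t, in01 t -> in01 (Y t).
Hypothesis X0 : X 0 = 0.
Hypothesis Y0 : Y 0 = 0.
Hypothesis X1 : X 1 = 1.
Hypothesis Y1 : Y 1 = 1.
Variable k : nat.
Variable xs : nat -> R.
Hypothesis Hlaps : alt_laps Y 0 1 k xs true.

Lemma lap_lt j : (j < k)%nat -> xs j < xs (S j).
Proof. destruct Hlaps as [_ [_ [_ [Hinc _]]]]; auto. Qed.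

Lemma lap_in01 j t : (j < k)%nat -> xs j <= t <= xs (S j) -> in01 t.
Proof.
  intros Hj Ht. pose proof (alt_laps_bounds _ _ _ _ _ _ Hlaps j ltac:(lia)).
  pose proof (alt_laps_bounds _ _ _ _ _ _ Hlaps (S j) ltac:(lia)). unfold in01; lra.
Qed.

Lemma lap_dir j : (j < k)%nat ->
  (Nat.even j = true -> strict_incr_on Y (xs j) (xs (S j))) /\
  (Nat.even j = false -> strict_decr_on Y (xs j) (xs (S j))).
Proof.
  intros Hj. destruct Hlaps as [_ [_ [_ [_ Hd]]]]. specialize (Hd j Hj).
  unfold monotone_dir in Hd. destruct (Nat.even j); simpl in Hd; split; intros; auto; discriminate.
Qed.

Lemma lap_hit_bottom j (Q : R -> Prop) : (j < k)%nat ->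
  ((exists t, xs j <= t <= xs (S j) /\ Y t = 0 /\ Q t) <->
   (if Nat.even j then Y (xs j) = 0 /\ Q (xs j) else Y (xs (S j)) = 0 /\ Q (xs (S j)))).
Proof.
  intros Hj. pose proof (lap_dir j Hj) as [Hi Hd]. pose proof (lap_lt j Hj).
  destruct (Nat.even j); [specialize (Hi eq_refl)|specialize (Hd eq_refl)]; split.
  - intros [t [Ht [Yt Qt]]]. destruct (Req_dec t (xs j)) as [->|N]; [auto|].
    pose proof (Hi (xs j) t ltac:(lra) ltac:(lra) ltac:(lra)).
    pose proof (HY01 (xs j) (lap_in01 j (xs j) Hj ltac:(lra))). unfold in01 in *. lra.
  - intros [A1 A2]. exists (xs j). repeat split; auto; lra.
  - intros [t [Ht [Yt Qt]]]. destruct (Req_dec t (xs (S j))) as [->|N]; [auto|].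
    pose proof (Hd t (xs (S j)) ltac:(lra) ltac:(lra) ltac:(lra)).
    pose proof (HY01 (xs (S j)) (lap_in01 j (xs (S j)) Hj ltac:(lra))). unfold in01 in *. lra.
  - intros [A1 A2]. exists (xs (S j)). repeat split; auto; lra.
Qed.

Lemma lap_hit_top j (Q : R -> Prop) v : (j < k)%nat -> 1 <= v ->
  ((exists t, xs j <= t <= xs (S j) /\ Y t = v /\ Q t) <->
   (if Nat.even j then Y (xs (S j)) = v /\ Q (xs (S j)) else Y (xs j) = v /\ Q (xs j))).
Proof.
  intros Hj Hv. pose proof (lap_dir j Hj) as [Hi Hd]. pose proof (lap_lt j Hj).
  destruct (Nat.even j); [specialize (Hi eq_refl)|specialize (Hd eq_refl)]; split.
  - intros [t [Ht [Yt Qt]]]. destruct (Req_dec t (xs (S j))) as [->|N]; [auto|].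
    pose proof (Hi t (xs (S j)) ltac:(lra) ltac:(lra) ltac:(lra)).
    pose proof (HY01 (xs (S j)) (lap_in01 j (xs (S j)) Hj ltac:(lra))). unfold in01 in *. lra.
  - intros [A1 A2]. exists (xs (S j)). repeat split; auto; lra.
  - intros [t [Ht [Yt Qt]]]. destruct (Req_dec t (xs j)) as [->|N]; [auto|].
    pose proof (Hd (xs j) t ltac:(lra) ltac:(lra) ltac:(lra)).
    pose proof (HY01 (xs j) (lap_in01 j (xs j) Hj ltac:(lra))). unfold in01 in *. lra.
  - intros [A1 A2]. exists (xs j). repeat split; auto; lra.
Qed.

(* Points are pairs [(c, s)]: a shift [c] and a curve parameter [s]; the next point
   of a chain must sit at height [level (c, s)]. *)
Definition level (p : R * R) : R := X (snd p) + fst p.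

Definition near (d : R) (p q : R * R) : Prop :=
  Rabs (fst q - fst p) < d /\ Rabs (snd q - snd p) < d.

Definition clopen_in (K C : R * R -> Prop) : Prop :=
  (forall p, C p -> K p) /\
  forall p, K p -> exists d, 0 < d /\ forall q, K q -> near d p q -> (C q <-> C p).

(* Connectedness in disguise: the component of [(0, 0)] in [K] reaches level [1]. *)
Definition reaches_top (K : R * R -> Prop) : Prop :=
  forall C, clopen_in K C -> C (0, 0) -> exists p, C p /\ 1 <= level p.

Definition admissible (K : R * R -> Prop) : Prop :=
  (forall p, K p -> 0 <= fst p <= 1 /\ in01 (snd p)) /\ K (0, 0).

Definition successor (K : R * R -> Prop) (q : R * R) : Prop :=
  exists s, K (fst q, s) /\ in01 (snd q) /\ Y (snd q) = X s + fst q.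

Lemma level_cont p : in01 (snd p) -> forall e, 0 < e -> exists d, 0 < d /\
  forall q, in01 (snd q) -> near d p q -> Rabs (level q - level p) < e.
Proof.
  destruct p as [c s]. intros Hs e He. simpl in Hs.
  destruct (HXc s Hs (e/2) ltac:(lra)) as [d [Hd Hf]].
  exists (Rmin d (e/2)). split; [apply Rmin_glb_lt; lra|].
  intros [c' s'] Hs' [N1 N2]. simpl in *. unfold level; simpl.
  pose proof (Rmin_l d (e/2)). pose proof (Rmin_r d (e/2)).
  specialize (Hf s' Hs' ltac:(lra)).
  replace (X s' + c' - (X s + c)) with ((X s' - X s) + (c' - c)) by ring.
  eapply Rle_lt_trans; [apply Rabs_triang|]. lra.
Qed.

Lemma admissible_successor K : admissible K -> admissible (successor K).
Proof.
  intros [Hb H0]. split.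
  - intros [c t] [s [Hs [Ht _]]]. simpl in *. split; [apply (Hb _ Hs)|exact Ht].
  - exists 0. simpl. repeat split; auto; unfold in01; lra.
Qed.

Lemma level_nonneg K : admissible K -> forall q, K q -> 0 <= level q.
Proof.
  intros [Hb _] [c s] Hq. destruct (Hb _ Hq) as [Hc Hs]. simpl in *.
  pose proof (HX01 s Hs). unfold level, in01 in *; simpl; lra.
Qed.

Definition lap_set_hit (C : R * R -> Prop) (j : nat) (c v : R) : Prop :=
  lap_hit Y (xs j) (xs (S j)) (fun c0 t => C (c0, t)) c v.

(* The alternating count over laps behaves like a degree: it only changes when a
   level crosses a lap endpoint, and these changes telescope to the ends of [[0, 1]]. *)
Definition lap_count (C : R * R -> Prop) (c v : R) : R :=
  altsum (fun j => ind (lap_set_hit C j c v)) k.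

Definition endpoint_crossing (C : R * R -> Prop) (p : R * R) (v' : R) (i : nat) : Prop :=
  Y (xs i) = level p /\ C (fst p, xs i) /\
  (if Nat.even i then v' < level p else level p < v').

Lemma lap_set_hit_jump K C (HC : clopen_in (successor K) C) p (Hp : K p) j (Hj : (j < k)%nat) :
  exists d, 0 < d /\ forall c' v', (exists s', K (c', s') /\ X s' + c' = v') ->
    Rabs (c' - fst p) < d -> Rabs (v' - level p) < d ->
    ind (lap_set_hit C j (fst p) (level p)) - ind (lap_set_hit C j c' v')
    = ind (endpoint_crossing C p v' j) + ind (endpoint_crossing C p v' (S j)).
Proof.
  destruct p as [c s]. simpl.
  pose proof (lap_lt j Hj) as Hlt. pose proof (lap_dir j Hj) as [Hi Hd].
  pose proof (alt_laps_bounds _ _ _ _ _ _ Hlaps j ltac:(lia)).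
  pose proof (alt_laps_bounds _ _ _ _ _ _ Hlaps (S j) ltac:(lia)).
  assert (Hloc : forall t0, xs j <= t0 <= xs (S j) -> Y t0 = level (c, s) -> exists e, 0 < e /\
    forall c' v' t', (exists s', K (c', s') /\ X s' + c' = v') -> Rabs (c' - c) < e ->
      Rabs (t' - t0) < e -> xs j <= t' <= xs (S j) -> Y t' = v' -> (C (c', t') <-> C (c, t0))).
  { intros t0 Ht0 Yt0.
    destruct HC as [_ HC]. destruct (HC (c, t0)) as [d0 [Hd0 HH0]].
    { exists s. simpl. split; [exact Hp|split; [apply (lap_in01 j); auto|]].
      rewrite Yt0; unfold level; simpl; ring. }
    exists d0. split; [exact Hd0|]. intros c' v' t' [s' [Ks' Es']] Hc Ht Ht' Yt'.
    apply HH0; [|split; simpl; auto].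
    exists s'. simpl. split; [exact Ks'|split; [apply (lap_in01 j); auto|lra]]. }
  unfold endpoint_crossing, lap_set_hit. cbn [fst snd]. rewrite even_succ_negb.
  destruct (Nat.even j) eqn:E; simpl.
  - destruct (lap_hit_jump_incr Y (xs j) (xs (S j)) Hlt (Hi eq_refl)) with
      (P := fun c t => C (c, t)) (Adm := fun c' v' => exists s', K (c', s') /\ X s' + c' = v')
      (c := c) (v := level (c, s)) as [d [Hd0 HH]]; [|exact Hloc|].
    + intros w Hw. apply cont01_IVT; auto; lra.
    + exists d; split; [exact Hd0|]. intros c' v' Ha Hc Hv. exact (HH c' v' Ha Hc Hv).
  - destruct (lap_hit_jump_decr Y (xs j) (xs (S j)) Hlt (Hd eq_refl)) with
      (P := fun c t => C (c, t)) (Adm := fun c' v' => exists s', K (c', s') /\ X s' + c' = v')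
      (c := c) (v := level (c, s)) as [d [Hd0 HH]]; [|exact Hloc|].
    + intros w Hw.
      destruct (cont01_IVT (fun t => - Y t) (cont01_opp Y HYc) (xs j) (xs (S j)))
        with (v := - w) as [t [Ht Yt]]; try lra.
      exists t; split; auto; lra.
    + exists d; split; [exact Hd0|]. intros c' v' Ha Hc Hv. exact (HH c' v' Ha Hc Hv).
Qed.

Lemma lap_count_locally_const K C (HK : admissible K) (HC : clopen_in (successor K) C)
  (Hno1 : forall c, 0 <= c -> ~ C (c, 1)) p (Hp : K p) :
  exists d, 0 < d /\ forall q, K q -> near d p q ->
    lap_count C (fst q) (level q) = lap_count C (fst p) (level p).
Proof.
  assert (Hall : forall m, (m <= k)%nat -> exists d, 0 < d /\ forall c' v',
    (exists s', K (c', s') /\ X s' + c' = v') ->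
    Rabs (c' - fst p) < d -> Rabs (v' - level p) < d -> forall j, (j < m)%nat ->
    ind (lap_set_hit C j (fst p) (level p)) - ind (lap_set_hit C j c' v')
    = ind (endpoint_crossing C p v' j) + ind (endpoint_crossing C p v' (S j))).
  { induction m; intros Hm; [exists 1; split; [lra|]; intros; lia|].
    destruct (IHm ltac:(lia)) as [d1 [Hd1 H1]].
    destruct (lap_set_hit_jump K C HC p Hp m ltac:(lia)) as [d2 [Hd2 H2]].
    exists (Rmin d1 d2). split; [now apply Rmin_glb_lt|].
    intros c' v' Ha Hc Hv j Hj. pose proof (Rmin_l d1 d2). pose proof (Rmin_r d1 d2).
    destruct (Nat.eq_dec j m) as [->|Nj]; [apply H2; auto; lra|apply H1; auto; try lra; lia]. }
  destruct (Hall k (le_n k)) as [d [Hd Hjump]].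
  pose proof HK as [Hb HK0].
  destruct (level_cont p (proj2 (Hb p Hp)) d Hd) as [dV [HdV HV]].
  exists (Rmin d dV). split; [now apply Rmin_glb_lt|].
  intros [c' s'] Hq [N1 N2]. pose proof (Rmin_l d dV). pose proof (Rmin_r d dV).
  specialize (HV (c', s') (proj2 (Hb _ Hq)) ltac:(split; lra)).
  pose proof Hlaps as [_ [H00 [Hk _]]].
  enough (lap_count C (fst p) (level p) - lap_count C c' (level (c', s')) = 0) by (simpl; lra).
  unfold lap_count. rewrite altsum_sub.
  rewrite (altsum_ext _ (fun j => ind (endpoint_crossing C p (level (c', s')) j)
                                  + ind (endpoint_crossing C p (level (c', s')) (S j)))).
  - rewrite altsum_telescope.
    rewrite (ind_false (endpoint_crossing C p _ 0)), (ind_false (endpoint_crossing C p _ k));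
      [ring| |].
    + intros [_ [HC1 _]]. rewrite Hk in HC1. apply (Hno1 (fst p)); [apply (Hb p Hp)|exact HC1].
    + intros [HY0 [_ Hlt]]. simpl in Hlt. rewrite H00, Y0 in HY0.
      pose proof (level_nonneg K HK _ Hq). lra.
  - intros j Hj. apply Hjump; [exists s'; split; auto|simpl in N1 |- *; lra|lra|exact Hj].
Qed.

Lemma lap_count_origin C : C (0, 0) -> ~ C (0, 1) -> lap_count C 0 0 = 1.
Proof.
  intros HC0 HC1. pose proof Hlaps as [_ [H00 [Hk _]]].
  unfold lap_count. rewrite (altsum_ext _ (fun j =>
     ind (Y (xs j) = 0 /\ C (0, xs j) /\ Nat.even j = true) +
     ind (Y (xs (S j)) = 0 /\ C (0, xs (S j)) /\ Nat.even (S j) = true))).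
  - rewrite altsum_telescope, (ind_true (Y (xs 0) = 0 /\ _ /\ _)).
    + rewrite (ind_false (Y (xs k) = 0 /\ _)); [ring|]. rewrite Hk, Y1. intros [? _]; lra.
    + rewrite H00, Y0. auto.
  - intros j Hj. unfold lap_set_hit, lap_hit.
    rewrite (ind_iff _ _ (lap_hit_bottom j (fun t => C (0, t)) Hj)), even_succ_negb.
    destruct (Nat.even j); simpl;
      rewrite (ind_false (_ /\ _ /\ false = true)) by (intros [_ [_ ?]]; discriminate);
      [rewrite Rplus_0_r|rewrite Rplus_0_l]; apply ind_iff; tauto.
Qed.

Lemma lap_count_top C c v : 1 <= v -> ~ C (c, 1) -> lap_count C c v = 0.
Proof.
  intros Hv HC1. pose proof Hlaps as [_ [H00 [Hk _]]].
  unfold lap_count. rewrite (altsum_ext _ (fun j =>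
     ind (Y (xs j) = v /\ C (c, xs j) /\ Nat.even j = false) +
     ind (Y (xs (S j)) = v /\ C (c, xs (S j)) /\ Nat.even (S j) = false))).
  - rewrite altsum_telescope.
    rewrite (ind_false (Y (xs 0) = _ /\ _ /\ _)) by (intros [_ [_ ?]]; discriminate).
    rewrite (ind_false (Y (xs k) = _ /\ _)); [ring|].
    rewrite Hk. intros [_ [? _]]. contradiction.
  - intros j Hj. unfold lap_set_hit, lap_hit.
    rewrite (ind_iff _ _ (lap_hit_top j (fun t => C (c, t)) v Hj Hv)), even_succ_negb.
    destruct (Nat.even j); simpl;
      rewrite (ind_false (_ /\ _ /\ true = false)) by (intros [_ [_ ?]]; discriminate);
      [rewrite Rplus_0_l|rewrite Rplus_0_r]; apply ind_iff; tauto.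
Qed.

Lemma reaches_top_successor K : admissible K -> reaches_top K -> reaches_top (successor K).
Proof.
  intros HK HG C HC HC0. apply NNPP; intros Hno.
  pose proof HK as [Hb HK0].
  assert (Hno1 : forall c, 0 <= c -> ~ C (c, 1)).
  { intros c Hc H1. apply Hno. exists (c, 1). split; [exact H1|]. unfold level; simpl. lra. }
  pose (D := fun p => K p /\ lap_count C (fst p) (level p) = 1).
  assert (HD : clopen_in K D).
  { split; [intros p [Kp _]; exact Kp|].
    intros p Kp. destruct (lap_count_locally_const K C HK HC Hno1 p Kp) as [d [Hd Hq]].
    exists d. split; [exact Hd|]. intros q Kq Hn. unfold D. rewrite (Hq q Kq Hn). tauto. }
  assert (HD0 : D (0, 0)).
  { split; [exact HK0|]. unfold level; simpl. rewrite X0, Rplus_0_r.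
    apply lap_count_origin; [exact HC0|apply Hno1; lra]. }
  destruct (HG D HD HD0) as [p [[Kp Np] Vp]].
  rewrite (lap_count_top C (fst p) (level p) Vp) in Np; [lra|].
  apply Hno1, (Hb p Kp).
Qed.

Definition base_set (p : R * R) : Prop := 0 <= fst p <= 1 /\ snd p = 0.

Lemma reaches_top_base : reaches_top base_set.
Proof.
  intros C [Hsub Hloc] HC0.
  pose (E := fun c => 0 <= c <= 1 /\ forall c', 0 <= c' <= c -> C (c', 0)).
  assert (HE0 : E 0) by (split; [lra|]; intros c' Hc'; replace c' with 0 by lra; exact HC0).
  destruct (completeness E) as [m [Hub Hlub]];
    [exists 1; intros c [Hc _]; lra|exists 0; exact HE0|].
  assert (Hm0 : 0 <= m) by (apply Hub; exact HE0).
  assert (Hm1 : m <= 1) by (apply Hlub; intros c [Hc _]; lra).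
  destruct (Hloc (m, 0)) as [d [Hd Hn]]; [split; simpl; auto|].
  assert (Near : forall c', 0 <= c' <= 1 -> Rabs (c' - m) < d -> C (c', 0)).
  { intros c' Hc' Hcd. apply (Hn (c', 0)); [split; simpl; auto|split; simpl; auto|].
    - rewrite Rminus_0_r, Rabs_R0; exact Hd.
    - destruct (classic (C (m, 0))) as [Cm|Nm]; [exact Cm|exfalso].
      assert (Hup : forall c, E c -> c <= m - d).
      { intros c [Hc Hall]. destruct (Rle_or_lt c (m - d)) as [|Hlt]; [assumption|].
        pose proof (Hub c (conj Hc Hall)). exfalso. apply Nm. apply (Hn (c, 0)); [split; simpl; lra|split; simpl|apply Hall; lra].
        - apply Rabs_def1; lra.
        - rewrite Rminus_0_r, Rabs_R0; exact Hd. }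
      pose proof (Hlub (m - d) Hup). lra. }
  assert (Hbelow : forall c', 0 <= c' <= m -> C (c', 0)).
  { intros c' Hc'. destruct (Rle_or_lt c' (m - d)) as [Hle|Hgt]; [|apply Near; [lra|apply Rabs_def1; lra]].
    apply NNPP; intros N. assert (Hup : forall c, E c -> c <= c').
    { intros c [Hc Hall]. destruct (Rle_or_lt c c') as [|Hlt]; [assumption|].
      exfalso; apply N, Hall; lra. }
    pose proof (Hlub c' Hup). lra. }
  destruct (Rlt_or_le m 1) as [Hlt|Hge].
  - exfalso. set (c2 := m + Rmin (d/2) (1 - m)).
    assert (Hc2 : m < c2 /\ c2 <= 1 /\ c2 <= m + d/2).
    { unfold c2. pose proof (Rmin_l (d/2) (1 - m)). pose proof (Rmin_r (d/2) (1 - m)).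
      assert (0 < Rmin (d/2) (1 - m)) by (apply Rmin_glb_lt; lra). lra. }
    assert (E c2).
    { split; [lra|]. intros c' Hc'. destruct (Rle_or_lt c' m); [apply Hbelow; lra|].
      apply Near; [lra|apply Rabs_def1; lra]. }
    pose proof (Hub c2 H). lra.
  - exists (1, 0). split; [apply Hbelow; lra|]. unfold level; simpl. rewrite X0; lra.
Qed.

(* [chain_set m (c, s)] iff some chain [0 = T 0, ..., T m = s] of parameters
   satisfies [Y (T (i + 1)) = X (T i) + c]. *)
Fixpoint chain_set (m : nat) : R * R -> Prop :=
  match m with O => base_set | S m' => successor (chain_set m') end.

Lemma admissible_chain_set m : admissible (chain_set m).
Proof.
  induction m as [|m IH]; [|exact (admissible_successor _ IH)].
  split; [intros p [H1 H2]; split; [exact H1|]; rewrite H2; unfold in01; lra|].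
  split; simpl; lra.
Qed.

Lemma reaches_top_chain_set m : reaches_top (chain_set m).
Proof.
  induction m as [|m IH]; [exact reaches_top_base|].
  exact (reaches_top_successor _ (admissible_chain_set m) IH).
Qed.

Lemma chain_set_level_one m : exists p, chain_set m p /\ level p = 1.
Proof.
  apply NNPP; intros N.
  destruct (admissible_chain_set m) as [Hb HK0].
  pose (C := fun p => chain_set m p /\ level p < 1).
  assert (HC : clopen_in (chain_set m) C).
  { split; [intros p [? _]; assumption|].
    intros p Kp. assert (Hne : level p <> 1) by (intros E; apply N; exists p; auto).
    destruct (level_cont p (proj2 (Hb p Kp)) (Rabs (level p - 1))) as [d [Hd Hq]];
      [apply Rabs_pos_lt; lra|].
    exists d. split; [exact Hd|]. intros q Kq Hn. specialize (Hq q (proj2 (Hb q Kq)) Hn).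
    unfold C. revert Hq. unfold Rabs; repeat destruct Rcase_abs; intros; split;
      intros [? ?]; split; auto; lra. }
  destruct (reaches_top_chain_set m C HC) as [p [[_ Hp] Hp']]; [|lra].
  split; [exact HK0|]. unfold level; simpl. rewrite X0; lra.
Qed.

Lemma chain_set_chain m c s : chain_set m (c, s) -> exists T : nat -> R,
  T O = 0 /\ T m = s /\ forall i, (i < m)%nat -> in01 (T (S i)) /\ Y (T (S i)) = X (T i) + c.
Proof.
  revert c s. induction m as [|m IH]; intros c s H.
  - destruct H as [_ H2]. simpl in H2. exists (fun _ => 0).
    split; [reflexivity|split; [now rewrite H2|intros; lia]].
  - destruct H as [s0 [H1 [H2 H3]]]. simpl in *.
    destruct (IH c s0 H1) as [T [T0 [Tm HT]]].
    exists (fun i => if Nat.eqb i (S m) then s else T i).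
    split; [exact T0|]. split; [now rewrite Nat.eqb_refl|].
    intros i Hi. destruct (Nat.eqb_spec (S i) (S m)) as [Q|Q].
    + injection Q as ->. destruct (Nat.eqb_spec m (S m)); [lia|]. now rewrite Tm.
    + destruct (Nat.eqb_spec i (S m)); [lia|]. apply HT. lia.
Qed.

Lemma level_chain_exists n : exists (T : nat -> R) c, T O = 0 /\
  (forall i, (i < S n)%nat -> in01 (T (S i)) /\ Y (T (S i)) = X (T i) + c) /\
  X (T (S n)) + c = 1.
Proof.
  destruct (chain_set_level_one (S n)) as [[c s] [Hp Hlevel]].
  destruct (chain_set_chain (S n) c s Hp) as [T [T0 [Tm HT]]].
  exists T, c. split; [exact T0|split; [exact HT|]].
  rewrite Tm. exact Hlevel.
Qed.

End LevelChains.

Lemma curve_level_chain_exists g : curve01 g -> g 0 = (0, 0) -> g 1 = (1, 1) ->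
  piecewise_monotone (fun t => pi2 (g t)) ->
  forall n, exists (T : nat -> R) c, T O = 0 /\
    (forall i, (i < S n)%nat -> in01 (T (S i)) /\ pi2 (g (T (S i))) = pi1 (g (T i)) + c) /\
    pi1 (g (T (S n))) + c = 1.
Proof.
  intros [HXc [HYc Hb]] g0 g1 Hpm n.
  destruct (piecewise_monotone_alt_laps _ Hpm) as [k [xs [up Hlaps]]].
  assert (Y0 : pi2 (g 0) = 0) by now rewrite g0.
  replace up with true in Hlaps
    by (symmetry; apply (alt_laps_first_up _ _ _ _ Hlaps Y0); intros t Ht; apply Hb, Ht).
  apply (level_chain_exists (fun t => pi1 (g t)) (fun t => pi2 (g t))
           HXc HYc) with (k := k) (xs := xs);
    try (intros t Ht; apply Hb, Ht); try exact Hlaps; now rewrite ?g0, ?g1.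
Qed.

Lemma good_points_of_chain g n (T : nat -> R) c : g 0 = (0, 0) -> T O = 0 ->
  (forall i, (i < S n)%nat -> in01 (T (S i)) /\ pi2 (g (T (S i))) = pi1 (g (T i)) + c) ->
  pi1 (g (T (S n))) + c = 1 -> exists A, good_points g n A.
Proof.
  intros g0 T0 HT Hend.
  set (A := fun i => if Nat.eqb i (S (S n)) then (1, 1) else g (T i)).
  assert (A_curve : forall i, (i <= S n)%nat -> A i = g (T i))
    by (intros i Hi; unfold A; destruct (Nat.eqb_spec i (S (S n))); [lia|reflexivity]).
  assert (A0 : A O = (0, 0)) by (rewrite A_curve, T0 by lia; exact g0).
  assert (A_next : forall i, (i <= S n)%nat -> pi2 (A (S i)) = pi1 (A i) + c).
  { intros i Hi. rewrite (A_curve i Hi).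
    destruct (Nat.eq_dec i (S n)) as [->|Ni].
    - unfold A. rewrite Nat.eqb_refl. simpl. lra.
    - rewrite A_curve by lia. apply HT. lia. }
  exists A. split; [exact A0|]. split; [unfold A; now rewrite Nat.eqb_refl|]. split.
  - intros i Hi. rewrite A_curve by lia. exists (T i). split; [|reflexivity].
    destruct i as [|i]; [lia|]. apply HT. lia.
  - intros i Hi. rewrite (A_next i Hi). destruct i as [|j]; simpl prev_pt.
    + rewrite A0, (A_curve (S n)) by lia. simpl. lra.
    + rewrite (A_next j) by lia. ring.
Qed.

Lemma on_curve_below_diag g P : curve01 g -> g 0 = (0, 0) -> g 1 = (1, 1) ->
  (forall t, 0 < t < 1 -> DeltaSet (g t)) -> on_curve g P ->
  0 <= pi2 P <= pi1 P /\ (pi2 P = 0 -> P = (0, 0)).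
Proof.
  intros [_ [_ Hb]] g0 g1 HD [t [Ht <-]].
  destruct (Req_dec t 0) as [->|N0]; [rewrite g0; simpl; split; [lra|auto]|].
  destruct (Req_dec t 1) as [->|N1]; [rewrite g1; simpl; split; [lra|intros; lra]|].
  destruct (HD t ltac:(unfold in01 in Ht; lra)) as [_ [Hy Hlt]].
  split; [lra|intros; lra].
Qed.

Lemma good_points_distinct g n A : curve01 g -> g 0 = (0, 0) -> g 1 = (1, 1) ->
  (forall t, 0 < t < 1 -> DeltaSet (g t)) -> good_points g n A ->
  forall i j, (i <= S (S n))%nat -> (j <= S (S n))%nat -> i <> j -> A i <> A j.
Proof.
  intros Hg g0 g1 HD [A0 [An [Hon Heq]]].
  pose proof (fun P => on_curve_below_diag g P Hg g0 g1 HD) as Hdiag.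
  set (c := pi2 (A 1%nat)).
  assert (Hrec : forall i, (i <= S n)%nat -> pi2 (A (S i)) = pi1 (A i) + c).
  { induction i as [|i IH]; intros Hi.
    - rewrite A0. unfold c; simpl; ring.
    - pose proof (Heq (S i) Hi) as E. simpl in E. rewrite IH in E by lia. lra. }
  assert (Hstep : forall i, (i <= S n)%nat -> pi2 (A i) + c <= pi2 (A (S i))).
  { intros [|i] Hi; [rewrite (Hrec O Hi), A0; simpl; lra|].
    rewrite (Hrec (S i) Hi). pose proof (Hdiag _ (Hon (S i) ltac:(lia))). lra. }
  assert (Hc : 0 < c).
  { pose proof (Hdiag _ (Hon 1%nat ltac:(lia))) as [[Hc0 _] Hzero].
    destruct (Req_dec c 0) as [E|]; [exfalso|unfold c in *; lra].
    assert (Hall0 : forall i, (i <= S n)%nat -> A i = (0, 0)).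
    { induction i as [|i IH]; intros Hi; [exact A0|].
      apply (Hdiag _ (Hon (S i) ltac:(lia))). rewrite Hrec, IH by lia. simpl; lra. }
    pose proof (Hrec (S n) (le_n _)) as Hlast. rewrite An, Hall0 in Hlast by lia.
    simpl in Hlast. lra. }
  assert (Hmono : forall i j, (i < j)%nat -> (j <= S (S n))%nat -> pi2 (A i) < pi2 (A j)).
  { intros i j Hij Hj. induction Hij as [|j Hij IH].
    - pose proof (Hstep i ltac:(lia)); lra.
    - pose proof (Hstep j ltac:(lia)). specialize (IH ltac:(lia)). lra. }
  intros i j Hi Hj Nij E.
  destruct (Nat.lt_total i j) as [L|[L|L]]; [|contradiction|].
  - pose proof (Hmono i j L Hj). rewrite E in *; lra.
  - pose proof (Hmono j i L Hi). rewrite E in *; lra.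
Qed.

Theorem proposition2 (g : R -> R * R) :
  curve01 g -> g 0 = (0, 0) -> g 1 = (1, 1) ->
  classU (fun t => pi2 (g t)) ->
  (forall n : nat, exists A : nat -> R * R, good_points g n A) /\
  ((forall t, 0 < t < 1 -> DeltaSet (g t)) ->
   forall n : nat, exists A : nat -> R * R, good_points g n A /\
     forall i j, (i <= S (S n))%nat -> (j <= S (S n))%nat -> i <> j -> A i <> A j).
Proof.
  intros Hg g0 g1 [Hpm _].
  assert (Hex : forall n, exists A, good_points g n A).
  { intros n.
    destruct (curve_level_chain_exists g Hg g0 g1 Hpm n) as [T [c [T0 [HT Hend]]]].
    exact (good_points_of_chain g n T c g0 T0 HT Hend). }
  split; [exact Hex|].
  intros HD n. destruct (Hex n) as [A HA].
  exists A. split; [exact HA|]. exact (good_points_distinct g n A Hg g0 g1 HD HA).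
Qed.
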